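(* Let $f\in R(A_2)$, $g\in R(A_1^* )$, $k\in K_2$, let $x\in D_2=D(A_2)\cap D(A_1^* )$ be the unique solution of $A_2x=f$, $A_1^*x=g$, $\pi_2x=k$, and let $\tilde x\in H_2$ be arbitrary. Set $e:=x-\tilde x$, $e_{A_1}:=\pi_{A_1}e$, $e_{A_2^*}:=\pi_{A_2^*}e$, $e_{K_2}:=\pi_2e$. Then: (i) $e=e_{A_1}+e_{K_2}+e_{A_2^*}\in R(A_1)\oplus K_2\oplus R(A_2^* )$ and $\|e\|_{H_2}^2=\|e_{A_1}\|_{H_2}^2+\|e_{K_2}\|_{H_2}^2+\|e_{A_2^*}\|_{H_2}^2$; (ii) $e_{A_1}=x_g-\pi_{A_1}\tilde x$ satisfies $\|e_{A_1}\|_{H_2}=\min_{\zeta\in D(A_1^* )}\big(c_1\|A_1^*\zeta-g\|_{H_1}+\|\zeta-\tilde x\|_{H_2}\big)$, with the minimum attained at $\hat\zeta:=e_{A_1}+\tilde x=x-\pi_{N(A_1^* )}e\in D(A_1^* )$, for which $A_1^*\hat\zeta=g$; (iii) $e_{A_2^*}=x_f-\pi_{A_2^*}\tilde x$ satisfies $\|e_{A_2^*}\|_{H_2}=\min_{\xi\in D(A_2)}\big(c_2\|A_2\xi-f\|_{H_3}+\|\xi-\tilde x\|_{H_2}\big)$, with the minimum attained at $\hat\xi:=e_{A_2^*}+\tilde x=x-\pi_{N(A_2)}e\in D(A_2)$, for which $A_2\hat\xi=f$; (iv) $e_{K_2}=k-\pi_2\tilde x$ satisfies $\|e_{K_2}\|_{H_2}=\min_{\varphi\in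 D(A_1)}\min_{\phi\in D(A_2^* )}\|k-\tilde x+A_1\varphi+A_2^*\phi\|_{H_2}$, with the minimum attained at $\hat\varphi:=(\mathcal{A}_1)^{-1}\pi_{A_1}\tilde x\in D(\mathcal{A}_1)$, $\hat\phi:=(\mathcal{A}_2^* )^{-1}\pi_{A_2^*}\tilde x\in D(\mathcal{A}_2^* )$, for which $A_1\hat\varphi+A_2^*\hat\phi=(1-\pi_2)\tilde x$.
   Context: Let $H_0,\dots,H_4$ be Hilbert spaces and, for $\ell=0,\dots,3$, $A_\ell:D(A_\ell)\subset H_\ell\to H_{\ell+1}$ densely defined closed linear operators with Hilbert space adjoints $A_\ell^*$, satisfying $R(A_\ell)\subset N(A_{\ell+1})$ for $\ell=0,1,2$. Standing assumption: $R(A_1)$ and $R(A_2)$ are closed and $K_2$ is finite dimensional. $K_2:=N(A_2)\cap N(A_1^* )$, $\pi_2:H_2\to K_2$ orthogonal projector; $\pi_{A_1}$, $\pi_{A_2^*}$ are the orthogonal projectors of $H_2$ onto $R(A_1)$, $R(A_2^* )$; $\pi_{N(A_1^* )}:=1-\pi_{A_1}$, $\pi_{N(A_2)}:=1-\pi_{A_2^*}$. Reduced operators $\mathcal{A}_\ell:=A_\ell|_{D(A_\ell)\cap\overline{R(A_\ell^* )}}$, $\mathcal{A}_\ell^*:=A_\ell^*|_{D(A_\ell^* )\cap\overline{R(A_\ell)}}$ (injective). $x_f:=(\mathcal{A}_2)^{-1}f$, $x_g:=(\mathcal{A}_1^* )^{-1}g$. $c_\ell\in(0,\infty)$ is the best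 constant with $\|x\|_{H_\ell}\le c_\ell\|A_\ell x\|_{H_{\ell+1}}$ for all $x\in D(\mathcal{A}_\ell)$ (equivalently $\|y\|_{H_{\ell+1}}\le c_\ell\|A_\ell^*y\|_{H_\ell}$ for $y\in D(\mathcal{A}_\ell^* )$). *)

(* Real Hilbert spaces are modelled as complete
   normed R-modules equipped with an inner product inducing the norm. *)
From HB Require Import structures.
From mathcomp Require Import all_boot all_order all_algebra.
From mathcomp Require Import all_classical all_reals all_analysis.
Set Implicit Arguments. Unset Strict Implicit. Unset Printing Implicit Defensive.
Import Order.TTheory GRing.Theory Num.Theory.
Import numFieldNormedType.Exports.
Local Open Scope classical_set_scope.
Local Open Scope ring_scope.

Section Defs.
Context {R : realType}.

Definition is_inner (H : normedModType R) (ip : H -> H -> R) : Prop :=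
  (forall x y, ip x y = ip y x) /\
  (forall (a : R) x y z, ip (a *: x + y) z = a * ip x z + ip y z) /\
  (forall x, ip x x = `|x| ^+ 2).

Definition lin_subspace {H : normedModType R} (D : set H) : Prop :=
  D 0 /\ forall (a : R) x y, D x -> D y -> D (a *: x + y).

Definition linear_on {H H' : normedModType R} (D : set H) (A : H -> H') : Prop :=
  forall (a : R) x y, D x -> D y -> A (a *: x + y) = a *: A x + A y.

Definition dd_closed_op {H H' : normedModType R} (D : set H) (A : H -> H') : Prop :=
  [/\ lin_subspace D, linear_on D A, closure D = setT &
      closed [set p : H * H' | D p.1 /\ A p.1 = p.2]].

Definition is_adjoint {H H' : normedModType R} (ip : H -> H -> R) (ip' : H' -> H' -> R)
  (D : set H) (A : H -> H') (Ds : set H') (As : H' -> H) : Prop :=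
  (forall y, Ds y <-> exists z : H, forall x, D x -> ip' (A x) y = ip x z) /\
  (forall x y, D x -> Ds y -> ip' (A x) y = ip x (As y)).

Definition kern {H H' : normedModType R} (D : set H) (A : H -> H') : set H :=
  [set x | D x /\ A x = 0].

Definition finite_dim {H : normedModType R} (S : set H) : Prop :=
  exists s : seq H, forall x, S x ->
    exists c : nat -> R, x = \sum_(i < size s) c i *: nth 0 s i.

Definition oproj {H : normedModType R} (ip : H -> H -> R) (S : set H) (x : H) : H :=
  xget 0 [set y | S y /\ forall z, S z -> ip (x - y) z = 0].

(* inverse of the reduced operator A|_{D ∩ Cl}, where Cl = closure of the range
   of the adjoint *)
Definition rinv {H H' : normedModType R} (D Cl : set H) (A : H -> H') (y : H') : H :=
  xget 0 [set x | D x /\ Cl x /\ A x = y].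

Definition best_const {H H' : normedModType R} (D Cl : set H) (A : H -> H') (c : R) : Prop :=
  0 < c /\ (forall x, D x -> Cl x -> `|x| <= c * `|A x|) /\
  (forall c', (forall x, D x -> Cl x -> `|x| <= c' * `|A x|) -> c <= c').

End Defs.

From HB Require Import structures.
From mathcomp Require Import all_boot all_order all_algebra.
From mathcomp Require Import all_classical all_reals all_analysis.
From mathcomp Require Import lra ring.
Import Order.TTheory GRing.Theory Num.Theory.
Import numFieldNormedType.Exports.
Local Open Scope classical_set_scope.
Local Open Scope ring_scope.
Set Implicit Arguments. Unset Strict Implicit. Unset Printing Implicit Defensive.

(* The closed ranges R(A1) and R(A2^* ) are orthogonal (A2 A1 = 0), and their
   common orthogonal complement is K2 = N(A2) /\ N(A1^* ): N(A^* ) = R(A)^perp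
   holds for any densely defined A, and N(A) = R(A^* )^perp for closed A, by
   projecting (y, 0) onto the graph of A.  R(A2^* ) is closed by the closed
   range theorem: for z orthogonal to N(A2) the Friedrichs inequality makes
   A2 w |-> <w, z> a bounded functional on R(A2), whose Riesz representative is
   a preimage of z under A2^*.  Hence H2 = R(A1) (+) K2 (+) R(A2^* ), which is (i).
   Since 1 - pi_A1 maps D(A1^* ) into N(A1^* ), pi_A1 x = x_g, and for any zeta
     |pi_A1 (x - xt)| <= |pi_A1 (x - zeta)| + |pi_A1 (zeta - xt)|
                     <= c1 |g - A1^* zeta| + |zeta - xt|
   by the Friedrichs inequality for A1^* on R(A1) and the contractivity of
   pi_A1, with equality at zeta = x - pi_N(A1^* ) e; (iii) is the same argument
   for A2.  Finally pi_2 (k - xt) = e_K2 and k - xt + A1 phi + A2^* psi differs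
   from it by a vector orthogonal to K2, which gives (iv). *)

Lemma sqr_eq0_le (R : realFieldType) (r K : R) :
  0 <= K -> (forall e, 0 < e -> r ^+ 2 <= e * K) -> r = 0.
Proof.
move=> K0 small; apply/eqP; apply: contraT => r_neq0.
have r2_gt0 : 0 < r ^+ 2 by rewrite exprn_even_gt0.
have e_gt0 : 0 < r ^+ 2 / (2 * (K + 1)) by rewrite divr_gt0 //; lra.
have := small _ e_gt0; rewrite mulrAC -mulrA.
have : K / (2 * (K + 1)) < 1 by rewrite ltr_pdivrMr; lra.
nra.
Qed.

Lemma quadratic_bound (R : realFieldType) (a b d : R) :
  0 <= b -> (forall t, 2 * t * a <= d + t ^+ 2 * b) -> a ^+ 2 <= d * b.
Proof.
move=> b_ge0 bound; have d_ge0 : 0 <= d by have := bound 0; lra.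
have [b0 | b_neq0] := eqVneq b 0.
  suff -> : a = 0 by rewrite b0; lra.
  apply/eqP; apply: contraT => a_neq0; have := bound ((d + 1) / (2 * a)).
  have -> : 2 * ((d + 1) / (2 * a)) * a = d + 1 by field.
  by rewrite b0 mulr0 addr0; lra.
have b_gt0 : 0 < b by rewrite lt_def b_neq0.
have := bound (a / b); set t := a / b.
have -> : a = t * b by rewrite /t mulfVK.
nra.
Qed.

Section InnerProduct.
Variables (R : realType) (V : lmodType R) (ip : V -> V -> R).
Hypothesis ipC : forall x y, ip x y = ip y x.
Hypothesis ipL : forall (a : R) x y z, ip (a *: x + y) z = a * ip x z + ip y z.

Lemma ip0l z : ip 0 z = 0.
Proof. by have := ipL 1 0 0 z; rewrite scale1r addr0 mul1r; lra. Qed.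

Lemma ipDl x y z : ip (x + y) z = ip x z + ip y z.
Proof. by rewrite -[x]scale1r ipL mul1r scale1r. Qed.

Lemma ipZl a x z : ip (a *: x) z = a * ip x z.
Proof. by rewrite -[a *: x]addr0 ipL ip0l addr0. Qed.

Lemma ipNl x z : ip (- x) z = - ip x z.
Proof. by rewrite -scaleN1r ipZl mulN1r. Qed.

Lemma ipBl x y z : ip (x - y) z = ip x z - ip y z.
Proof. by rewrite ipDl ipNl. Qed.

Lemma ip0r z : ip z 0 = 0.
Proof. by rewrite ipC ip0l. Qed.

Lemma ipDr x y z : ip z (x + y) = ip z x + ip z y.
Proof. by rewrite ipC ipDl !(ipC z). Qed.

Lemma ipZr a x z : ip z (a *: x) = a * ip z x.
Proof. by rewrite ipC ipZl ipC. Qed.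

Lemma ipBr x y z : ip z (x - y) = ip z x - ip z y.
Proof. by rewrite ipC ipBl !(ipC z). Qed.

Lemma ipDD x y : ip (x + y) (x + y) = ip x x + 2 * ip x y + ip y y.
Proof. by rewrite !ipDl !ipDr (ipC y x); ring. Qed.

Lemma ipBB x y : ip (x - y) (x - y) = ip x x - 2 * ip x y + ip y y.
Proof. by rewrite !ipBl !ipBr (ipC y x); ring. Qed.

Lemma ipBBC x y : ip (x - y) (x - y) = ip (y - x) (y - x).
Proof. by rewrite !ipBB (ipC x y); ring. Qed.

Lemma ip_parallelogram x y :
  ip (x + y) (x + y) + ip (x - y) (x - y) = 2 * ip x x + 2 * ip y y.
Proof. by rewrite ipDD ipBB; ring. Qed.

(* [subspace] is [lin_subspace] for a bare [lmodType], and completeness is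
   measured by [ip]: both are also used on the graph [H * H'], whose inner
   product does not induce its norm. *)
Definition subspace (S : set V) :=
  S 0 /\ forall (a : R) x y, S x -> S y -> S (a *: x + y).

Definition orth (S : set V) x := forall z, S z -> ip x z = 0.

Definition ip_cauchy (u : nat -> V) := forall e, 0 < e -> exists N,
  forall n m, (N <= n)%N -> (N <= m)%N -> ip (u n - u m) (u n - u m) < e.

Definition ip_cvg (u : nat -> V) l := forall e, 0 < e -> exists N,
  forall n, (N <= n)%N -> ip (u n - l) (u n - l) < e.

Definition ip_complete (S : set V) :=
  forall u, (forall n, S (u n)) -> ip_cauchy u -> exists2 l, S l & ip_cvg u l.

Section Subspace.
Variable S : set V.
Hypothesis sS : subspace S.

Lemma subspace0 : S 0. Proof. by case: sS. Qed.

Lemma subspaceD x y : S x -> S y -> S (x + y).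
Proof. by case: sS => _ lin Sx Sy; rewrite -[x]scale1r; apply: lin. Qed.

Lemma subspaceZ a x : S x -> S (a *: x).
Proof. by case: sS => S0 lin Sx; rewrite -[_ *: _]addr0; apply: lin. Qed.

Lemma subspaceB x y : S x -> S y -> S (x - y).
Proof. by move=> Sx Sy; rewrite -scaleN1r; apply: subspaceD (subspaceZ _ _). Qed.

End Subspace.

Lemma orth_subspace S : subspace (orth S).
Proof.
split=> [z _|a x y ox oy z Sz]; first exact: ip0l.
by rewrite ipL ox // oy // mulr0 addr0.
Qed.

Lemma orthU S S' : orth S `&` orth S' = orth (S `|` S').
Proof.
apply/seteqP; split=> [x [oS oS'] z [Sz|S'z]|x oSS']; [exact: oS | exact: oS' |].
by split=> z ?; apply: oSS'; [left | right].
Qed.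

Hypothesis ip_ge0 : forall x, 0 <= ip x x.

Lemma ip_CauchySchwarz x y : ip x y ^+ 2 <= ip x x * ip y y.
Proof.
apply: quadratic_bound; first exact: ip_ge0.
by move=> t; have := ip_ge0 (x - t *: y); rewrite ipBB ipZr ipZl ipZr; lra.
Qed.

Lemma ip_eq0_approx x z :
  (forall e, 0 < e -> exists y, ip y z = 0 /\ ip (x - y) (x - y) < e) -> ip x z = 0.
Proof.
move=> approx; apply: (sqr_eq0_le (ip_ge0 z)) => e e_gt0.
have [y [yz xy_lt]] := approx e e_gt0.
have -> : ip x z = ip (x - y) z by rewrite ipBl yz subr0.
apply: le_trans (ip_CauchySchwarz _ _) _.
by apply: ler_wpM2r; [exact: ip_ge0 | exact: ltW].
Qed.

Lemma orth_ip_complete S : ip_complete setT -> ip_complete (orth S).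
Proof.
move=> complT u orth_u cau; have [l _ ul] := complT u (fun=> I) cau.
exists l => // z Sz; apply: ip_eq0_approx => e /ul [N uN].
by exists (u N); rewrite ipBBC orth_u //; split; last exact: uN.
Qed.

Section Projection.
Variables (S : set V) (x : V).
Hypotheses (sS : subspace S) (cS : ip_complete S).

Local Notation dist2 y := (ip (x - y) (x - y)).

Lemma near_min_orth d y z : (forall w, S w -> d <= dist2 w) -> S y -> S z ->
  ip (x - y) z ^+ 2 <= (dist2 y - d) * ip z z.
Proof.
move=> dmin Sy Sz; apply: quadratic_bound; first exact: ip_ge0.
move=> t; have := dmin _ (subspaceD sS Sy (subspaceZ sS t Sz)).
by rewrite opprD addrA ipBB ipZr ipZl ipZr; nra.
Qed.

Lemma near_min_cauchy d u v : (forall w, S w -> d <= dist2 w) -> S u -> S v ->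
  ip (u - v) (u - v) <= 2 * dist2 u + 2 * dist2 v - 4 * d.
Proof.
move=> dmin Su Sv; set m := 2^-1 *: (u + v).
have Sm : S m by apply: (subspaceZ sS); apply: (subspaceD sS).
have sumE : (x - u) + (x - v) = 2 *: (x - m).
  by rewrite scalerBr scalerA mulfV // scale1r scaler_nat mulr2n opprD addrACA.
have diffE : (x - u) - (x - v) = v - u by rewrite opprB addrC addrA subrK.
have := ip_parallelogram (x - u) (x - v); rewrite sumE diffE ipZl ipZr (ipBBC v u).
by have := dmin _ Sm; lra.
Qed.

Theorem exists_oproj : exists y, S y /\ orth S (x - y).
Proof.
set E := [set dist2 y | y in S].
have infE : has_inf E.
  by split; [exists (dist2 0), 0; first exact: subspace0 | exists 0 => _ [y _ <-]].
set d := inf E.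
have dmin w : S w -> d <= dist2 w by move=> Sw; apply: (ge_inf infE.2); exists w.
pose eps n : R := n.+1%:R^-1.
have eps_small e : 0 < e -> exists N, forall n, (N <= n)%N -> eps n < e / 4.
  move=> e_gt0; have e4_gt0 : 0 < e / 4 by rewrite divr_gt0.
  by have [N _ ?] := near_infty_natSinv_lt (PosNum e4_gt0); exists N.
have /choice [u min_u] : forall n, exists y, S y /\ dist2 y < d + eps n.
  move=> n; have eps_gt0 : 0 < eps n by rewrite invr_gt0.
  by have [_ [y Sy <-] lt_y] := inf_adherent eps_gt0 infE; exists y.
have cau : ip_cauchy u.
  move=> e e_gt0; have [N epsN] := eps_small e e_gt0.
  exists N => n m le_Nn le_Nm; have := near_min_cauchy dmin (min_u n).1 (min_u m).1.
  have := epsN n le_Nn; have := epsN m le_Nm; have := (min_u n).2; have := (min_u m).2.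
  set e4 := e / 4; have e4E : e = e4 * 4 by rewrite mulfVK.
  lra.
have [l Sl ul] := cS (fun n => (min_u n).1) cau.
exists l; split=> // z Sz; apply: (sqr_eq0_le (ip_ge0 z)) => e e_gt0.
have [N1 epsN1] := eps_small e e_gt0.
have [N2 ul_N2] : exists N, forall n, (N <= n)%N -> ip (u n - l) (u n - l) < e / 4.
  by apply: ul; rewrite divr_gt0.
set n := maxn N1 N2.
have near_min : ip (x - u n) z ^+ 2 <= e / 4 * ip z z.
  apply: le_trans (near_min_orth dmin (min_u n).1 Sz) _; apply: ler_wpM2r; first exact: ip_ge0.
  by have := epsN1 n (leq_maxl _ _); have := (min_u n).2; lra.
have near_lim : ip (u n - l) z ^+ 2 <= e / 4 * ip z z.
  apply: le_trans (ip_CauchySchwarz _ _) _; apply: ler_wpM2r; first exact: ip_ge0.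
  exact: ltW (ul_N2 n (leq_maxr _ _)).
have -> : x - l = (x - u n) + (u n - l) by rewrite addrA subrK.
by rewrite (ipDl (x - u n)); have := sqr_ge0 (ip (x - u n) z - ip (u n - l) z); nra.
Qed.

End Projection.

Section Riesz.
Variables (M : set V) (phi : V -> R) (C : R).
Hypotheses (sM : subspace M) (cM : ip_complete M) (C_ge0 : 0 <= C).
Hypothesis phi_lin :
  forall a m m', M m -> M m' -> phi (a *: m + m') = a * phi m + phi m'.
Hypothesis phi_bound : forall m, M m -> phi m ^+ 2 <= C * ip m m.

Let phiB m m' : M m -> M m' -> phi (m - m') = phi m - phi m'.
Proof.
by move=> Mm Mm'; rewrite addrC -scaleN1r phi_lin // mulN1r addrC.
Qed.

Let phi0 : phi 0 = 0.
Proof. by have M0 := subspace0 sM; rewrite -(subrr 0) phiB // subrr. Qed.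

Let phiZ a m : M m -> phi (a *: m) = a * phi m.
Proof. by move=> Mm; rewrite -[a *: m]addr0 phi_lin ?phi0 ?addr0 //; exact: subspace0. Qed.

Let N := [set m | M m /\ phi m = 0].

Let kernel_subspace : subspace N.
Proof.
split=> [|a m m' [Mm phim] [Mm' phim']]; first by split; [exact: subspace0 | exact: phi0].
by split; [case: sM => _; apply | rewrite phi_lin // phim phim' mulr0 addr0].
Qed.

Let kernel_ip_complete : ip_complete N.
Proof.
move=> u Nu cau; have [l Ml ul] := cM (fun n => (Nu n).1) cau.
exists l => //; split=> //; apply: (sqr_eq0_le C_ge0) => e /ul [n ul_n].
have [Mun phi_un] := Nu n.
have := phi_bound (subspaceB sM Ml Mun); rewrite phiB // phi_un subr0 ipBBC.
move/le_trans; apply; rewrite mulrC; apply: ler_wpM2r => //.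
exact: ltW (ul_n n (leqnn n)).
Qed.

Theorem riesz : exists2 y, M y & forall m, M m -> phi m = ip m y.
Proof.
have [[m0 Mm0 phi_m0]|phi_eq0] := pselect (exists2 m, M m & phi m != 0); last first.
  exists 0 => [|m Mm]; first exact: subspace0.
  by rewrite ip0r; apply/eqP; apply: contra_notT phi_eq0 => ?; exists m.
have [n0 [[Mn0 phi_n0] orth_r]] := exists_oproj m0 kernel_subspace kernel_ip_complete.
set r := m0 - n0 in orth_r.
have Mr : M r := subspaceB sM Mm0 Mn0.
have phi_r : phi r = phi m0 by rewrite phiB // phi_n0 subr0.
have qr_neq0 : ip r r != 0.
  apply: contraNneq phi_m0 => qr0; rewrite -phi_r -sqrf_eq0 eq_le sqr_ge0 andbT.
  by have := phi_bound Mr; rewrite qr0 mulr0.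
exists ((phi r / ip r r) *: r) => [|m Mm]; first exact: subspaceZ.
have N_comb : N (phi r *: m - phi m *: r).
  have [Mrm Mmr] : M (phi r *: m) /\ M (phi m *: r) by split; apply: subspaceZ.
  by split; [exact: subspaceB | rewrite phiB // !phiZ // mulrC subrr].
have := orth_r _ N_comb; rewrite ipBr !ipZr (ipC r m) => /eqP.
by rewrite subr_eq0 mulrAC => /eqP ->; rewrite mulfK.
Qed.

End Riesz.

End InnerProduct.

Section LinearOn.
Variables (R : realType) (H H' : normedModType R) (D : set H) (A : H -> H').
Hypotheses (sD : subspace D) (linA : linear_on D A).

Lemma linear_onB x y : D x -> D y -> A (x - y) = A x - A y.
Proof. by move=> Dx Dy; rewrite addrC -scaleN1r linA // scaleN1r addrC. Qed.

Lemma linear_on0 : A 0 = 0.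
Proof. by have D0 := subspace0 sD; rewrite -(subrr 0) linear_onB // subrr. Qed.

Lemma image_subspace : subspace (A @` D).
Proof.
split=> [|a _ _ [x Dx <-] [y Dy <-]]; first by exists 0; [exact: subspace0 | exact: linear_on0].
by exists (a *: x + y); [case: sD => _; apply | exact: linA].
Qed.

End LinearOn.

Lemma closure_normP (R : realType) (H : normedModType R) (A : set H) x :
  closure A x <-> forall e, 0 < e -> exists2 y, A y & `|x - y| < e.
Proof.
split=> [clAx e e_gt0 | approx B /nbhs_ballP [e /= e_gt0 ballB]].
  have [y [Ay xy]] := clAx _ (nbhsx_ballx x _ e_gt0).
  by exists y => //; rewrite -ball_normE in xy.
by have [y Ay xy] := approx e e_gt0; exists y; split; last by apply: ballB; rewrite -ball_normE.
Qed.

Section Hilbert.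
Variables (R : realType) (H : completeNormedModType R) (ip : H -> H -> R).
Hypothesis hip : is_inner ip.

Lemma innerC x y : ip x y = ip y x.
Proof. by case: hip. Qed.

Lemma innerL a x y z : ip (a *: x + y) z = a * ip x z + ip y z.
Proof. by case: hip => _ []. Qed.

Lemma inner_normE x : ip x x = `|x| ^+ 2.
Proof. by case: hip => _ []. Qed.

Lemma inner_ge0 x : 0 <= ip x x.
Proof. by rewrite inner_normE sqr_ge0. Qed.

Lemma inner_eq0 x : ip x x = 0 -> x = 0.
Proof. by rewrite inner_normE => /eqP; rewrite sqrf_eq0 normr_eq0 => /eqP. Qed.

Lemma norm_inner_le x y : `|ip x y| <= `|x| * `|y|.
Proof.
rewrite -(ler_pXn2r (_ : (0 < 2)%N)) ?nnegrE ?mulr_ge0 // real_normK ?num_real //.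
by rewrite exprMn -!inner_normE; exact: ip_CauchySchwarz innerC innerL inner_ge0 x y.
Qed.

Lemma pythagoras x y : ip x y = 0 -> `|x + y| ^+ 2 = `|x| ^+ 2 + `|y| ^+ 2.
Proof. by move=> xy; rewrite -!inner_normE (ipDD innerC innerL) xy mulr0 addr0. Qed.

Lemma orth_closure S x : orth ip S x -> orth ip (closure S) x.
Proof.
move=> orth_x z /closure_normP clSz; rewrite innerC.
apply: (ip_eq0_approx innerC innerL inner_ge0) => e e_gt0.
have sqrt_gt0 : 0 < Num.sqrt e by rewrite sqrtr_gt0.
have [y Sy zy] := clSz _ sqrt_gt0; exists y; split; first by rewrite innerC orth_x.
by rewrite inner_normE -(sqr_sqrtr (ltW e_gt0)) ltr_pXn2r ?nnegrE ?sqrtr_ge0.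
Qed.

Lemma dense_orth0 D v : closure D = setT -> orth ip D v -> v = 0.
Proof. by move=> dense /orth_closure; rewrite dense => /(_ v I)/inner_eq0. Qed.

Lemma ip_cvgP (u : nat -> H) l : ip_cvg ip u l <-> u @ \oo --> l.
Proof.
split=> [ul | /cvgrPdist_lt ul e e_gt0].
  apply/cvgrPdist_lt => e e_gt0; have [N ulN] := ul _ (exprn_gt0 2 e_gt0).
  by exists N => // n /ulN; rewrite inner_normE distrC ltr_pXn2r ?nnegrE ?(ltW e_gt0).
have sqrt_gt0 : 0 < Num.sqrt e by rewrite sqrtr_gt0.
have [N _ ulN] := ul _ sqrt_gt0; exists N => n /ulN lt_n.
by rewrite inner_normE distrC -(sqr_sqrtr (ltW e_gt0)) ltr_pXn2r ?nnegrE ?sqrtr_ge0.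
Qed.

Lemma ip_cauchy_cvg u : ip_cauchy ip u -> exists l, ip_cvg ip u l.
Proof.
move=> cau; exists (limn u); apply/ip_cvgP; apply: cauchy_cvg; apply/cauchy_exP => e e_gt0.
have [N uN] := cau _ (exprn_gt0 2 e_gt0); exists (u N); exists N => // n le_Nn /=.
rewrite -ball_normE /= -(ltr_pXn2r (_ : (0 < 2)%N)) ?nnegrE ?(ltW e_gt0) //.
by rewrite -inner_normE uN.
Qed.

Lemma closed_ip_complete S : closed S -> ip_complete ip S.
Proof.
move=> clS u Su /ip_cauchy_cvg [l ul]; exists l => //.
by apply: (closed_cvg _ clS _ _ ((ip_cvgP u l).1 ul)); exists 0%N.
Qed.

Lemma closure_subspace (S : set H) : subspace S -> subspace (closure S).
Proof.
case=> S0 linS; split=> [|a x y /closure_normP clx /closure_normP cly].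
  exact: subset_closure.
apply/closure_normP => e e_gt0.
have ea_gt0 : 0 < e / (2 * (`|a| + 1)) by rewrite divr_gt0 // ltr_pMr //; lra.
have e2_gt0 : 0 < e / 2 by rewrite divr_gt0.
have [x' Sx' xx'] := clx _ ea_gt0; have [y' Sy' yy'] := cly _ e2_gt0.
exists (a *: x' + y'); first exact: linS.
rewrite opprD addrACA -scalerBr (le_lt_trans (ler_normD _ _)) // normrZ.
have : `|a| * `|x - x'| <= e / 2.
  apply: le_trans (ler_wpM2l (normr_ge0 a) (ltW xx')) _.
  by rewrite mulrA ler_pdivrMr ?mulr_gt0 //; nra.
by lra.
Qed.

Lemma norm_le_orthD x y : ip x y = 0 -> `|x| <= `|x + y|.
Proof.
move=> xy; rewrite -(ler_pXn2r (_ : (0 < 2)%N)) ?nnegrE // pythagoras //.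
by rewrite lerDl sqr_ge0.
Qed.

Section OrthogonalProjection.
Variable S : set H.
Hypothesis sS : subspace S.
Local Notation pi := (oproj ip S).

Lemma oproj_unique v y : S y -> orth ip S (v - y) -> pi v = y.
Proof.
move=> Sy orth_y; apply: xget_unique => // y' [Sy' orth_y'].
apply/eqP; rewrite -subr_eq0; apply/eqP/inner_eq0.
have Sd : S (y' - y) := subspaceB sS Sy' Sy.
have {1}-> : y' - y = (v - y) - (v - y') by rewrite opprB [_ + (y' - v)]addrC addrA subrK.
by rewrite (ipBl innerL) orth_y // orth_y' // subrr.
Qed.

Lemma oproj_id y : S y -> pi y = y.
Proof. by move=> Sy; apply: oproj_unique => // z _; rewrite subrr (ip0l innerL). Qed.

Hypothesis cS : ip_complete ip S.

Lemma oprojP v : S (pi v) /\ orth ip S (v - pi v).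
Proof. exact (xgetPex 0 (exists_oproj innerC innerL inner_ge0 v sS cS)). Qed.

Lemma oprojB u v : pi (u - v) = pi u - pi v.
Proof.
have [Su orth_u] := oprojP u; have [Sv orth_v] := oprojP v.
apply: oproj_unique => [|z Sz]; first exact: subspaceB.
have -> : u - v - (pi u - pi v) = (u - pi u) - (v - pi v).
  by rewrite !opprB addrACA [RHS]addrACA [- v + _]addrC.
by rewrite (ipBl innerL) orth_u // orth_v // subrr.
Qed.

Lemma norm_oproj_le v : `|pi v| <= `|v|.
Proof.
have [Spv orth_v] := oprojP v; have vE : v = pi v + (v - pi v) by rewrite [pi v + _]addrC subrK.
rewrite [X in _ <= `|X|]vE.
apply: norm_le_orthD; rewrite innerC; exact: orth_v.
Qed.

End OrthogonalProjection.

Section ReducedPreimage.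
Variables (H' : normedModType R) (DT M : set H) (T : H -> H').
Hypotheses (sDT : subspace DT) (linT : linear_on DT T) (sM : subspace M).
Hypothesis orthM_kern : orth ip M `<=` kern DT T.

Lemma reduced_preimage w : DT w -> exists2 w0, DT w0 /\ closure M w0 & T w0 = T w.
Proof.
move=> DTw; have sclM := closure_subspace sM.
have [clM_w0 orth_w0] := oprojP sclM (closed_ip_complete (@closed_closure _ M)) w.
set w0 := oproj ip (closure M) w in clM_w0 orth_w0 *.
have [DT_d T_d] : kern DT T (w - w0).
  by apply: orthM_kern => z Mz; apply: orth_w0; exact: subset_closure.
have DTw0 : DT w0 by have := subspaceB sDT DTw DT_d; rewrite subKr.
exists w0 => //; apply/eqP; rewrite eq_sym -subr_eq0 -(linear_onB linT) //; exact/eqP.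
Qed.

Lemma rinvP y : (T @` DT) y ->
  DT (rinv DT (closure M) T y) /\ closure M (rinv DT (closure M) T y) /\
  T (rinv DT (closure M) T y) = y.
Proof.
move=> [w /reduced_preimage [w0 [DTw0 clMw0] Tw0] <-].
have ex_w0 : exists w0, DT w0 /\ closure M w0 /\ T w0 = T w by exists w0.
exact (xgetPex 0 ex_w0).
Qed.

End ReducedPreimage.

Section ErrorComponent.
Variables (H' : normedModType R) (DT S : set H) (T : H -> H') (c : R).
Hypotheses (sDT : subspace DT) (linT : linear_on DT T).
Hypotheses (sS : subspace S) (cS : ip_complete ip S).
Hypothesis kernE : kern DT T = orth ip S.
Hypothesis poincare : forall y, DT y -> S y -> `|y| <= c * `|T y|.
Variables (g : H') (x xt : H).
Hypotheses (DTx : DT x) (Tx : T x = g).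
Local Notation pi := (oproj ip S).

Lemma dom_oproj v : DT v -> DT (pi v) /\ T (pi v) = T v.
Proof.
move=> DTv; have [DTd Td] : kern DT T (v - pi v) by rewrite kernE; exact: (oprojP sS cS v).2.
have := subspaceB sDT DTv DTd; rewrite subKr => DTpv.
by split=> //; move: Td; rewrite (linear_onB linT) // => /eqP; rewrite subr_eq0 => /eqP.
Qed.

Lemma rinv_oproj : rinv DT (closure S) T g = pi x.
Proof.
have [DTpx Tpx] := dom_oproj DTx; have clSpx := subset_closure (oprojP sS cS x).1.
apply: xget_unique => [|w [DTw [clSw Tw]]]; first by do !split=> //; rewrite Tpx.
have : kern DT T (w - pi x).
  by split; [exact: subspaceB | rewrite (linear_onB linT) // Tw Tpx Tx subrr].
rewrite kernE => /orth_closure/(_ (w - pi x)) orth_d.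
apply/eqP; rewrite -subr_eq0; apply/eqP/inner_eq0/orth_d.
by apply: (subspaceB (closure_subspace sS)).
Qed.

Lemma norm_oproj_err_le z :
  DT z -> `|pi (x - xt)| <= c * `|T z - g| + `|z - xt|.
Proof.
move=> DTz; have [DTpx Tpx] := dom_oproj DTx; have [DTpz Tpz] := dom_oproj DTz.
have Sd : S (pi x - pi z) := subspaceB sS (oprojP sS cS x).1 (oprojP sS cS z).1.
have := poincare (subspaceB sDT DTpx DTpz) Sd.
rewrite (linear_onB linT) // Tpx Tpz Tx [`|g - _|]distrC => poinc_xz.
rewrite oprojB // -(subrKA (pi z) (pi x) (- pi xt)) -(oprojB sS cS z xt).
apply: le_trans (ler_normD _ _) (lerD poinc_xz (norm_oproj_le sS cS _)).
Qed.

Lemma error_component :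
  let e := x - xt in let zh := pi e + xt in
  pi e = rinv DT (closure S) T g - pi xt /\
  (forall z, DT z -> `|pi e| <= c * `|T z - g| + `|z - xt|) /\
  zh = x - (e - pi e) /\ DT zh /\ T zh = g /\
  c * `|T zh - g| + `|zh - xt| = `|pi e|.
Proof.
move=> e zh; have zhE : zh = x - (e - pi e).
  by rewrite /zh opprB addrCA /e subKr.
have [DTd Td] : kern DT T (e - pi e) by rewrite kernE; exact: (oprojP sS cS e).2.
have Tzh : T zh = g by rewrite zhE (linear_onB linT) // Td subr0.
split; first by rewrite rinv_oproj oprojB.
split; first exact: norm_oproj_err_le.
split=> //; split; first by rewrite zhE; exact: subspaceB.
by split=> //; rewrite Tzh subrr normr0 mulr0 add0r /zh addrK.
Qed.

End ErrorComponent.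

Section OrthDecomposition.
Variables (S1 S3 K : set H).
Hypotheses (sS1 : subspace S1) (cS1 : ip_complete ip S1).
Hypotheses (sS3 : subspace S3) (cS3 : ip_complete ip S3).
Hypothesis S1_orth : S1 `<=` orth ip S3.
Hypothesis KE : K = orth ip S1 `&` orth ip S3.
Local Notation pi1 := (oproj ip S1).
Local Notation pi3 := (oproj ip S3).
Local Notation piK := (oproj ip K).

Let orth13 a b : S1 a -> S3 b -> ip a b = 0.
Proof. by move=> /S1_orth; apply. Qed.

Let KE' : K = orth ip (S1 `|` S3).
Proof. by rewrite KE orthU. Qed.

Let sK : subspace K.
Proof. by rewrite KE'; apply: (orth_subspace innerL). Qed.

Let cK : ip_complete ip K.
Proof.
rewrite KE'; apply: (orth_ip_complete innerC innerL inner_ge0).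
exact/closed_ip_complete/closedT.
Qed.

Lemma oproj_compl v : piK v = v - pi1 v - pi3 v.
Proof.
have [S1p orth1] := oprojP sS1 cS1 v; have [S3p orth3] := oprojP sS3 cS3 v.
apply: (oproj_unique sK) => [|z].
  rewrite KE; split=> z Sz.
    by rewrite (ipBl innerL) orth1 // innerC orth13 // subrr.
  by rewrite [v - _ - _]addrAC (ipBl innerL) orth3 // orth13 // subrr.
rewrite -addrA -opprD subKr KE => -[orth1z orth3z].
by rewrite (ipDl innerL) !(innerC _ z) orth1z // orth3z // addr0.
Qed.

Lemma orth_decomposition e :
  e = pi1 e + piK e + pi3 e /\ S1 (pi1 e) /\ K (piK e) /\ S3 (pi3 e) /\
  `|e| ^+ 2 = `|pi1 e| ^+ 2 + `|piK e| ^+ 2 + `|pi3 e| ^+ 2.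
Proof.
have S1p := (oprojP sS1 cS1 e).1; have S3p := (oprojP sS3 cS3 e).1.
have Kp := (oprojP sK cK e).1.
have [orthK1 orthK3] : (orth ip S1 `&` orth ip S3) (piK e) by rewrite -KE.
have eE : e = pi1 e + piK e + pi3 e by rewrite oproj_compl [e - _ - _]addrAC subrKC subrK.
do !split => //; rewrite {1}eE pythagoras ?pythagoras //; first by rewrite innerC orthK1.
by rewrite (ipDl innerL) orth13 // orthK3 // addr0.
Qed.

Lemma norm_oproj_compl_le w s1 s3 : S1 s1 -> S3 s3 -> `|piK w| <= `|w + s1 + s3|.
Proof.
move=> S1s1 S3s3; have [Kp orthp] := oprojP sK cK w.
have -> : w + s1 + s3 = piK w + ((w - piK w) + s1 + s3).
  by rewrite !addrA [piK w + w]addrC addrK.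
apply: norm_le_orthD; rewrite innerC 2!(ipDl innerL).
have [orth1 orth3] : (orth ip S1 `&` orth ip S3) (piK w) by rewrite -KE.
by rewrite orthp // [ip s1 _]innerC [ip s3 _]innerC orth1 // orth3 // !add0r.
Qed.

Lemma oproj_compl_err k x xt : K k -> piK x = k ->
  piK (x - xt) = k - piK xt /\
  forall s1 s3, S1 s1 -> S3 s3 -> `|piK (x - xt)| <= `|k - xt + s1 + s3|.
Proof.
move=> Kk pik; have errE : piK (x - xt) = k - piK xt by rewrite oprojB // pik.
split=> // s1 s3 S1s1 S3s3.
by rewrite errE -[X in X - _](oproj_id sK Kk) -oprojB // norm_oproj_compl_le.
Qed.

End OrthDecomposition.

End Hilbert.

Section ClosedOperator.
Variables (R : realType) (H H' : completeNormedModType R).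
Variables (ip : H -> H -> R) (ip' : H' -> H' -> R).
Hypotheses (hip : is_inner ip) (hip' : is_inner ip').
Variables (D : set H) (A : H -> H') (Ds : set H') (As : H' -> H).
Hypotheses (hop : dd_closed_op D A) (had : is_adjoint ip ip' D A Ds As).

Let ipC := innerC hip.
Let ipL := innerL hip.
Let ipC' := innerC hip'.
Let ipL' := innerL hip'.

Lemma dom_subspace : subspace D. Proof. by case: hop. Qed.

Lemma op_linear : linear_on D A. Proof. by case: hop. Qed.

Lemma adjointE x y : D x -> Ds y -> ip' (A x) y = ip x (As y).
Proof. by case: had => _; apply. Qed.

Lemma adj_domP y : Ds y <-> exists z, forall x, D x -> ip' (A x) y = ip x z.
Proof. by case: had. Qed.

Let dom_orth0 v : orth ip D v -> v = 0.
Proof. by case: hop => _ _ dense _; exact: (dense_orth0 hip dense). Qed.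

Lemma adj_dom_subspace : subspace Ds.
Proof.
split=> [|a y y' Dy Dy'].
  by apply/adj_domP; exists 0 => x Dx; rewrite ipC' (ip0l ipL') (ip0r ipC ipL).
apply/adj_domP; exists (a *: As y + As y') => x Dx.
rewrite ipC' ipL' !(ipC' _ (A x)) !adjointE //.
by rewrite (ipDr ipC ipL) (ipZr ipC ipL).
Qed.

Lemma adj_linear : linear_on Ds As.
Proof.
move=> a y y' Dy Dy'; apply/eqP; rewrite -subr_eq0; apply/eqP/dom_orth0 => x Dx.
have Dyy' : Ds (a *: y + y') by case: adj_dom_subspace => _; apply.
rewrite ipC (ipBr ipC ipL) -adjointE //.
rewrite (ipDr ipC ipL) (ipZr ipC ipL) -!adjointE //.
by rewrite ipC' ipL' -!(ipC' (A x)) subrr.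
Qed.

Lemma kern_adjE : kern Ds As = orth ip' (A @` D).
Proof.
apply/seteqP; split=> [y [Dy Asy] _ [x Dx <-]|y orth_y].
  by rewrite ipC' adjointE // Asy (ip0r ipC ipL).
have Dy : Ds y.
  apply/adj_domP; exists 0 => x Dx.
  by rewrite ipC' orth_y ?(ip0r ipC ipL) //; exists x.
split=> //; apply: dom_orth0 => x Dx.
by rewrite ipC -adjointE // ipC' orth_y //; exists x.
Qed.

Let ipG (p q : H * H') := ip p.1 q.1 + ip' p.2 q.2.

Let ipG_C p q : ipG p q = ipG q p.
Proof. by rewrite /ipG ipC ipC'. Qed.

Let ipG_L a p q r : ipG (a *: p + q) r = a * ipG p r + ipG q r.
Proof. by rewrite /ipG /= ipL ipL'; ring. Qed.

Let ipG_ge0 p : 0 <= ipG p p.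
Proof. by rewrite addr_ge0 ?inner_ge0. Qed.

Let graph := [set p : H * H' | D p.1 /\ A p.1 = p.2].

Let graph_subspace : subspace graph.
Proof.
have [D0 linD] := dom_subspace.
split=> [|a p q [Dp Ap] [Dq Aq]]; first by split=> //; exact: linear_on0 dom_subspace op_linear.
by split=> /=; [exact: linD | rewrite op_linear // Ap Aq].
Qed.

Let graph_ip_complete : ip_complete ipG graph.
Proof.
move=> u graph_u cau.
have [l1 ul1] : exists l1, ip_cvg ip (fun n => (u n).1) l1.
  apply: (ip_cauchy_cvg hip) => e /cau [N uN]; exists N => n m le_Nn le_Nm.
  by have := uN n m le_Nn le_Nm; have := inner_ge0 hip' ((u n).2 - (u m).2); rewrite /ipG /=; lra.
have [l2 ul2] : exists l2, ip_cvg ip' (fun n => (u n).2) l2.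
  apply: (ip_cauchy_cvg hip') => e /cau [N uN]; exists N => n m le_Nn le_Nm.
  by have := uN n m le_Nn le_Nm; have := inner_ge0 hip ((u n).1 - (u m).1); rewrite /ipG /=; lra.
exists (l1, l2).
  have ul : (fun n => ((u n).1, (u n).2)) @ \oo --> (l1, l2).
    by apply: cvg_pair; [apply/(ip_cvgP hip) | apply/(ip_cvgP hip')].
  apply: (closed_cvg _ _ _ _ ul); first by case: hop.
  by exists 0%N => // n _; have [] := graph_u n; case: (u n).
move=> e e_gt0; have e2_gt0 : 0 < e / 2 by rewrite divr_gt0.
have [N1 ulN1] := ul1 _ e2_gt0; have [N2 ulN2] := ul2 _ e2_gt0.
exists (maxn N1 N2) => n; rewrite geq_max => /andP[le_N1n le_N2n].
by have := ulN1 n le_N1n; have := ulN2 n le_N2n; rewrite /ipG /=; lra.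
Qed.

Lemma orth_range_adj_sub_kern : orth ip (As @` Ds) `<=` kern D A.
Proof.
move=> y orth_y.
have [[w Aw] [[Dw /= <-] orth_w]] :=
  exists_oproj ipG_C ipG_L ipG_ge0 (y, 0) graph_subspace graph_ip_complete.
have adj_Aw u : D u -> ip' (A u) (A w) = ip u (y - w).
  move=> Du; have := orth_w (u, A u) (conj Du erefl); rewrite /ipG /= sub0r.
  rewrite (ipNl ipL') (ipC' (A w)) (ipC (y - w)); lra.
have Ds_Aw : Ds (A w) by apply/adj_domP; exists (y - w).
have As_Aw : As (A w) = y - w.
  apply/eqP; rewrite -subr_eq0; apply/eqP/dom_orth0 => u Du.
  by rewrite ipC (ipBr ipC ipL) -adjointE // adj_Aw // subrr.
have y_yw : ip y (y - w) = 0 by rewrite -As_Aw; apply: orth_y; exists (A w).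
have w_yw : ip w (y - w) = ip' (A w) (A w) by rewrite -As_Aw adjointE.
have qyw : ip (y - w) (y - w) = - ip' (A w) (A w).
  by rewrite (ipBl ipL) y_yw w_yw sub0r.
have qAw0 : ip' (A w) (A w) = 0.
  by apply/eqP; rewrite eq_le inner_ge0 // andbT -oppr_ge0 -qyw inner_ge0.
have /(inner_eq0 hip)/eqP : ip (y - w) (y - w) = 0 by rewrite qyw qAw0 oppr0.
by rewrite subr_eq0 => /eqP ->; split=> //; exact: (inner_eq0 hip').
Qed.

Lemma kernE : kern D A = orth ip (As @` Ds).
Proof.
apply/seteqP; split=> [w [Dw Aw] _ [y Dy <-]|]; last exact: orth_range_adj_sub_kern.
by rewrite -adjointE // Aw ipC' (ip0r ipC' ipL').
Qed.

Lemma range_adj_subspace : subspace (As @` Ds).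
Proof. exact: image_subspace adj_dom_subspace adj_linear. Qed.

Let reduced_dom w : D w -> exists2 w0, D w0 /\ closure (As @` Ds) w0 & A w0 = A w.
Proof.
apply: (reduced_preimage hip dom_subspace op_linear range_adj_subspace).
exact: orth_range_adj_sub_kern.
Qed.

Variable c : R.
Hypothesis c_best : best_const D (closure (As @` Ds)) A c.

Let poincare w : D w -> closure (As @` Ds) w -> `|w| <= c * `|A w|.
Proof. by case: c_best => _ [bound _]; exact: bound. Qed.

Lemma op_poincare w : D w -> (As @` Ds) w -> `|w| <= c * `|A w|.
Proof. by move=> Dw /subset_closure; exact: poincare. Qed.

Lemma adj_poincare y : Ds y -> (A @` D) y -> `|y| <= c * `|As y|.
Proof.
move=> Dy [w /reduced_dom [w0 [Dw0 clw0] Aw0] Aw]; rewrite -Aw -Aw0 in Dy *.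
have : `|A w0| * `|A w0| <= c * `|As (A w0)| * `|A w0|.
  rewrite -expr2 -(inner_normE hip') adjointE //; apply: le_trans (ler_norm _) _.
  apply: le_trans (norm_inner_le hip _ _) _; rewrite mulrAC.
  by apply: ler_wpM2r => //; exact: poincare.
have [-> _|Aw0_neq0] := eqVneq `|A w0| 0; first by rewrite mulr_ge0 // ltW //; case: c_best.
by rewrite ler_pM2r // lt_def Aw0_neq0 /=.
Qed.

Lemma orth_kern_bound z w : orth ip (kern D A) z -> D w ->
  ip w z ^+ 2 <= c ^+ 2 * `|z| ^+ 2 * ip' (A w) (A w).
Proof.
move=> orth_z /[dup] Dw /reduced_dom [w0 [Dw0 clw0] Aw0].
have kern_d : kern D A (w - w0).
  by split; [apply: (subspaceB dom_subspace) | rewrite (linear_onB op_linear) // Aw0 subrr].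
have -> : ip w z = ip w0 z.
  by apply/eqP; rewrite -subr_eq0 -(ipBl ipL) ipC orth_z.
rewrite (inner_normE hip') -Aw0 -real_normK ?num_real // -!exprMn.
have c_ge0 : 0 <= c by case: c_best => /ltW.
have bound_ge0 : 0 <= c * `|z| * `|A w0| by do 2?apply: mulr_ge0.
rewrite ler_pXn2r ?nnegrE //.
apply: le_trans (norm_inner_le hip _ _) _; rewrite mulrAC.
by apply: ler_wpM2r => //; exact: poincare.
Qed.

Hypothesis closed_range : closed (A @` D).

Lemma orth_kern_sub_range_adj : orth ip (kern D A) `<=` As @` Ds.
Proof.
move=> z orth_z; pose phi m := ip (xget 0 [set w | D w /\ A w = m]) z.
have phiA w : D w -> phi (A w) = ip w z.
  move=> Dw; have ex_w : exists w', D w' /\ A w' = A w by exists w.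
  have [Dw' Aw'] := xgetPex 0 ex_w.
  apply/eqP; rewrite -subr_eq0 -(ipBl ipL) ipC orth_z //.
  by split; [apply: (subspaceB dom_subspace) | rewrite (linear_onB op_linear) // Aw' subrr].
have C_ge0 : 0 <= c ^+ 2 * `|z| ^+ 2 by rewrite mulr_ge0 ?sqr_ge0.
have phi_lin a m m' : (A @` D) m -> (A @` D) m' -> phi (a *: m + m') = a * phi m + phi m'.
  move=> [w Dw <-] [w' Dw' <-]; have Dww' : D (a *: w + w') by case: dom_subspace => _; apply.
  by rewrite -op_linear // !phiA // ipL.
have phi_bound m : (A @` D) m -> phi m ^+ 2 <= c ^+ 2 * `|z| ^+ 2 * ip' m m.
  by move=> [w Dw <-]; rewrite phiA //; exact: orth_kern_bound.
have [y Ry phiE] := riesz ipC' ipL' (inner_ge0 hip')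
  (image_subspace dom_subspace op_linear) (closed_ip_complete hip' closed_range)
  C_ge0 phi_lin phi_bound.
have Dy : Ds y by apply/adj_domP; exists z => x Dx; rewrite -phiE ?phiA //; exists x.
exists y => //; apply/eqP; rewrite -subr_eq0; apply/eqP/dom_orth0 => x Dx.
by rewrite ipC (ipBr ipC ipL) -adjointE // -phiE ?phiA ?subrr //; exists x.
Qed.

Lemma range_adj_ip_complete : ip_complete ip (As @` Ds).
Proof.
have -> : As @` Ds = orth ip (kern D A).
  apply/seteqP; split=> [_ [y Dy <-] w [Dw Aw]|]; last exact: orth_kern_sub_range_adj.
  by rewrite ipC -adjointE // Aw ipC' (ip0r ipC' ipL').
apply: (orth_ip_complete ipC ipL (inner_ge0 hip)).
exact/(closed_ip_complete hip)/closedT.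
Qed.

End ClosedOperator.

Section HilbertComplex.
Variables (R : realType) (H1 H2 H3 : completeNormedModType R).
Variables (ip1 : H1 -> H1 -> R) (ip2 : H2 -> H2 -> R) (ip3 : H3 -> H3 -> R).
Hypotheses (hip1 : is_inner ip1) (hip2 : is_inner ip2) (hip3 : is_inner ip3).
Variables (D1 : set H1) (A1 : H1 -> H2) (D1s : set H2) (A1s : H2 -> H1).
Variables (D2 : set H2) (A2 : H2 -> H3) (D2s : set H3) (A2s : H3 -> H2).
Hypotheses (hop1 : dd_closed_op D1 A1) (had1 : is_adjoint ip1 ip2 D1 A1 D1s A1s).
Hypotheses (hop2 : dd_closed_op D2 A2) (had2 : is_adjoint ip2 ip3 D2 A2 D2s A2s).
Hypothesis R1_sub : A1 @` D1 `<=` kern D2 A2.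
Hypotheses (cR1 : closed (A1 @` D1)) (cR2 : closed (A2 @` D2)).
Variable c2 : R.
Hypothesis best2 : best_const D2 (closure (A2s @` D2s)) A2 c2.

Local Notation K2 := (kern D2 A2 `&` kern D1s A1s).
Local Notation piA1 := (oproj ip2 (A1 @` D1)).
Local Notation piA2s := (oproj ip2 (A2s @` D2s)).
Local Notation pi2 := (oproj ip2 K2).

Let sR1 := image_subspace (dom_subspace hop1) (op_linear hop1).
Let cR1' := closed_ip_complete hip2 cR1.
Let sR2s := range_adj_subspace hip2 hip3 hop2 had2.
Let cR2s := range_adj_ip_complete hip2 hip3 hop2 had2 best2 cR2.

Let R1_orth : A1 @` D1 `<=` orth ip2 (A2s @` D2s).
Proof. by rewrite -(kernE hip2 hip3 hop2 had2). Qed.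

Let K2E : K2 = orth ip2 (A1 @` D1) `&` orth ip2 (A2s @` D2s).
Proof. by rewrite (kernE hip2 hip3 hop2 had2) (kern_adjE hip1 hip2 hop1 had1) setIC. Qed.

Lemma error_orth_decomposition e :
  e = piA1 e + pi2 e + piA2s e /\ (A1 @` D1) (piA1 e) /\ K2 (pi2 e) /\
  (A2s @` D2s) (piA2s e) /\ `|e| ^+ 2 = `|piA1 e| ^+ 2 + `|pi2 e| ^+ 2 + `|piA2s e| ^+ 2.
Proof. exact (orth_decomposition hip2 sR1 cR1' sR2s cR2s R1_orth K2E e). Qed.

Lemma error_harmonic_component k x xt : K2 k -> pi2 x = k ->
  let vh := rinv D1 (closure (A1s @` D1s)) A1 (piA1 xt) in
  let ph := rinv D2s (closure (A2 @` D2)) A2s (piA2s xt) in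
  pi2 (x - xt) = k - pi2 xt /\
  (forall v p, D1 v -> D2s p -> `|pi2 (x - xt)| <= `|k - xt + A1 v + A2s p|) /\
  (D1 vh /\ closure (A1s @` D1s) vh) /\ (D2s ph /\ closure (A2 @` D2) ph) /\
  A1 vh + A2s ph = xt - pi2 xt /\ `|k - xt + A1 vh + A2s ph| = `|pi2 (x - xt)|.
Proof.
move=> Kk pik vh ph; have [errE err_min] := oproj_compl_err hip2 K2E xt Kk pik.
have [D1vh [clvh A1vh]] := rinvP hip1 (dom_subspace hop1) (op_linear hop1)
  (range_adj_subspace hip1 hip2 hop1 had1) (orth_range_adj_sub_kern hip1 hip2 hop1 had1)
  (oprojP hip2 sR1 cR1' xt).1.
have orthR2_sub : orth ip3 (A2 @` D2) `<=` kern D2s A2s.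
  by rewrite (kern_adjE hip2 hip3 hop2 had2).
have [D2sph [clph A2sph]] := rinvP hip3 (adj_dom_subspace hip2 hip3 had2)
  (adj_linear hip2 hip3 hop2 had2) (image_subspace (dom_subspace hop2) (op_linear hop2))
  orthR2_sub (oprojP hip2 sR2s cR2s xt).1.
have sumE : A1 vh + A2s ph = xt - pi2 xt.
  by rewrite A1vh A2sph (oproj_compl hip2 sR1 cR1' sR2s cR2s R1_orth K2E) -addrA -opprD subKr.
do !split=> //; last by rewrite -addrA sumE subrKA errE.
by move=> v p D1v D2sp; apply: err_min; [exists v | exists p].
Qed.

End HilbertComplex.

Theorem theorem4p1 (R : realType)
  (H0 H1 H2 H3 H4 : completeNormedModType R)
  (ip0 : H0 -> H0 -> R) (ip1 : H1 -> H1 -> R) (ip2 : H2 -> H2 -> R)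
  (ip3 : H3 -> H3 -> R) (ip4 : H4 -> H4 -> R)
  (D0 : set H0) (A0 : H0 -> H1) (D0s : set H1) (A0s : H1 -> H0)
  (D1 : set H1) (A1 : H1 -> H2) (D1s : set H2) (A1s : H2 -> H1)
  (D2 : set H2) (A2 : H2 -> H3) (D2s : set H3) (A2s : H3 -> H2)
  (D3 : set H3) (A3 : H3 -> H4) (D3s : set H4) (A3s : H4 -> H3)
  (c1 c2 : R)
  (f : H3) (g : H1) (k : H2) (x xt : H2) :
  is_inner ip0 -> is_inner ip1 -> is_inner ip2 -> is_inner ip3 -> is_inner ip4 ->
  dd_closed_op D0 A0 -> dd_closed_op D1 A1 -> dd_closed_op D2 A2 -> dd_closed_op D3 A3 ->
  is_adjoint ip0 ip1 D0 A0 D0s A0s -> is_adjoint ip1 ip2 D1 A1 D1s A1s ->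
  is_adjoint ip2 ip3 D2 A2 D2s A2s -> is_adjoint ip3 ip4 D3 A3 D3s A3s ->
  A0 @` D0 `<=` kern D1 A1 -> A1 @` D1 `<=` kern D2 A2 -> A2 @` D2 `<=` kern D3 A3 ->
  closed (A1 @` D1) -> closed (A2 @` D2) ->
  finite_dim (kern D2 A2 `&` kern D1s A1s) ->
  best_const D1 (closure (A1s @` D1s)) A1 c1 ->
  best_const D2 (closure (A2s @` D2s)) A2 c2 ->
  (A2 @` D2) f -> (A1s @` D1s) g -> (kern D2 A2 `&` kern D1s A1s) k ->
  D2 x -> D1s x -> A2 x = f -> A1s x = g ->
  oproj ip2 (kern D2 A2 `&` kern D1s A1s) x = k ->
  let K2 := kern D2 A2 `&` kern D1s A1s in
  let piA1 := oproj ip2 (A1 @` D1) in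
  let piA2s := oproj ip2 (A2s @` D2s) in
  let pi2 := oproj ip2 K2 in
  let xf := rinv D2 (closure (A2s @` D2s)) A2 f in
  let xg := rinv D1s (closure (A1 @` D1)) A1s g in
  let e := x - xt in
  let eA1 := piA1 e in
  let eA2s := piA2s e in
  let eK2 := pi2 e in
  (* (i) *)
  (e = eA1 + eK2 + eA2s /\ (A1 @` D1) eA1 /\ K2 eK2 /\ (A2s @` D2s) eA2s /\
   `|e| ^+ 2 = `|eA1| ^+ 2 + `|eK2| ^+ 2 + `|eA2s| ^+ 2) /\
  (* (ii) *)
  (let zh := eA1 + xt in
   eA1 = xg - piA1 xt /\
   (forall z, D1s z -> `|eA1| <= c1 * `|A1s z - g| + `|z - xt|) /\
   zh = x - (e - piA1 e) /\ D1s zh /\ A1s zh = g /\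
   c1 * `|A1s zh - g| + `|zh - xt| = `|eA1|) /\
  (* (iii) *)
  (let xh := eA2s + xt in
   eA2s = xf - piA2s xt /\
   (forall xi, D2 xi -> `|eA2s| <= c2 * `|A2 xi - f| + `|xi - xt|) /\
   xh = x - (e - piA2s e) /\ D2 xh /\ A2 xh = f /\
   c2 * `|A2 xh - f| + `|xh - xt| = `|eA2s|) /\
  (* (iv) *)
  (let vh := rinv D1 (closure (A1s @` D1s)) A1 (piA1 xt) in
   let ph := rinv D2s (closure (A2 @` D2)) A2s (piA2s xt) in
   eK2 = k - pi2 xt /\
   (forall v p, D1 v -> D2s p -> `|eK2| <= `|k - xt + A1 v + A2s p|) /\
   (D1 vh /\ closure (A1s @` D1s) vh) /\ (D2s ph /\ closure (A2 @` D2) ph) /\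
   A1 vh + A2s ph = xt - pi2 xt /\
   `|k - xt + A1 vh + A2s ph| = `|eK2|).
Proof.
move=> _ hip1 hip2 hip3 _ _ hop1 hop2 _ _ had1 had2 _ _ R1_sub _ cR1 cR2 _ best1 best2 _ _
  Kk D2x D1sx A2x A1sx pik K2 piA1 piA2s pi2 xf xg e eA1 eA2s eK2.
split.
  exact (error_orth_decomposition hip1 hip2 hip3 hop1 had1 hop2 had2 R1_sub cR1 cR2 best2 e).
split.
  exact (error_component hip2 (adj_dom_subspace hip1 hip2 had1) (adj_linear hip1 hip2 hop1 had1)
    (image_subspace (dom_subspace hop1) (op_linear hop1)) (closed_ip_complete hip2 cR1)
    (kern_adjE hip1 hip2 hop1 had1) (adj_poincare hip1 hip2 hop1 had1 best1) xt D1sx A1sx).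
split.
  exact (error_component hip2 (dom_subspace hop2) (op_linear hop2)
    (range_adj_subspace hip2 hip3 hop2 had2) (range_adj_ip_complete hip2 hip3 hop2 had2 best2 cR2)
    (kernE hip2 hip3 hop2 had2) (op_poincare best2) xt D2x A2x).
exact (error_harmonic_component hip1 hip2 hip3 hop1 had1 hop2 had2 R1_sub cR1 cR2 best2 xt Kk pik).
Qed.
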